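(* Let $m<n$ be positive integers with $m\mid n$, $d=n/m$, and regard $\mathrm{GL}(m)\subset\mathrm{GL}(n)$ via $x\mapsto\mathrm{diag}(x,\dots,x)$ ($d$ blocks), acting on $V=\mathbb C^n$ with standard basis $e_1,\dots,e_n$ (so $e_1,\dots,e_m$ is a basis of $W=\mathbb C^m$). Let $\alpha:\{1,\dots,n\}\to\{1,\dots,p\}$ be surjective and $P=\mathrm{Stab}_{\mathrm{GL}(n)}(\mathcal F_\alpha)$, where $\mathcal F_\alpha=\{\langle e_i:\alpha(i)\le j\rangle\}_{j=1}^{p-1}$. Define $\beta:\{1,\dots,m\}\to\{1,\dots,p\}^d$ by $\beta(r)=(\alpha(r),\alpha(m+r),\dots,\alpha((d-1)m+r))$, let $\mathcal I$ be its image, and let $\le$ be the componentwise partial order on $\{1,\dots,p\}^d$. (a) $Q:=P\cap\mathrm{GL}(m)$ is a parabolic subgroup of $\mathrm{GL}(m)$ if and only if $\le$ restricts to a total order on $\mathcal I$. Moreover, in that case, writing $\mathcal I=\{b_1<\dots<b_q\}$, we have $Q=\mathrm{Stab}_{\mathrm{GL}(m)}(\mathcal F_\beta)$ with $\mathcal F_\beta=\{\langle e_i:\beta(i)\le b_j\rangle\}_{j=1}^{q-1}$; in particular, with $d_j=\#\beta^{-1}(\{b_1,\dots,b_j\})$, $\mathrm{GL}(m)/Q$ is identified with $\mathrm{Fl}(d_1,\dots,d_{q-1};W)$. (b) If $Q$ is parabolic, then the unipotent radicals satisfy $U_Q\subset U_P$ if and only if any two distinct elements $(x_1,\dots,x_d),(y_1,\dots,y_d)$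 of $\mathcal I$ satisfy $x_i\neq y_i$ for all $i\in\{1,\dots,d\}$.
   Context: $\mathrm{Fl}(d_1,\dots,d_{q-1};W)$ denotes the variety of flags $F_1\subset\dots\subset F_{q-1}$ of subspaces of $W$ with $\dim F_j=d_j$. *)

From HB Require Import structures.
From mathcomp Require Import all_boot all_order all_algebra.
From mathcomp Require Import reals complex mxtens.
Set Implicit Arguments. Unset Strict Implicit. Unset Printing Implicit Defensive.
Import Order.TTheory GRing.Theory Num.Theory.
Local Open Scope ring_scope.

Section Defs.
Variable F : fieldType.

(* "GL(m) ⊂ GL(n)", x ↦ diag(x,...,x) (d blocks) = I_d ⊗ x ; the index of  *)
(* (block k, position r) is mxtens_index (k, r) = k*m + r.                 *)
Definition blockdiag (d m : nat) (x : 'M[F]_m) : 'M[F]_(d * m) :=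
  (1%:M : 'M[F]_d) *t x.

Definition coord_span (n : nat) (P : pred 'I_n) : 'M[F]_n :=
  \matrix_(i, k) (((P i) && (i == k))%:R : F).

(* g (invertible) stabilizes the subspace S, for the usual action g·v on   *)
(* column vectors; in terms of row spaces this reads S g^T = S.            *)
Definition stabilizes (n : nat) (g : 'M[F]_n) (S : 'M[F]_n) : bool :=
  ((S *m g^T) == S)%MS.

(* F_alpha = { <e_i : alpha(i) <= j> }_{j=1}^{p-1}  (0-based: j < p-1)     *)
Definition flag_alpha (n p : nat) (alpha : 'I_n -> 'I_p) (j : nat) : 'M[F]_n :=
  coord_span (fun i => (alpha i <= j)%N).

Definition stab_alpha (n p : nat) (alpha : 'I_n -> 'I_p) (g : 'M[F]_n) : Prop :=
  g \in unitmx /\ forall j : nat, (j < p.-1)%N -> stabilizes g (flag_alpha alpha j).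

Definition Q_of (d m p : nat) (alpha : 'I_(d * m) -> 'I_p) (x : 'M[F]_m) : Prop :=
  x \in unitmx /\ stab_alpha alpha (blockdiag d x).

Definition beta (d m p : nat) (alpha : 'I_(d * m) -> 'I_p) (r : 'I_m)
  : {ffun 'I_d -> 'I_p} := [ffun k => alpha (mxtens_index (k, r))].

Definition Iset (d m p : nat) (alpha : 'I_(d * m) -> 'I_p) : {set {ffun 'I_d -> 'I_p}} :=
  [set beta alpha r | r : 'I_m].

Definition cle (d p : nat) (x y : {ffun 'I_d -> 'I_p}) : bool :=
  [forall k, (x k <= y k)%N].

Definition upper_borel (m : nat) (b : 'M[F]_m) : Prop :=
  b \in unitmx /\ forall i j : 'I_m, (j < i)%N -> b i j = 0.

Definition is_subgroup (m : nat) (G : 'M[F]_m -> Prop) : Prop :=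
  (forall x, G x -> x \in unitmx) /\ G 1%:M /\
  (forall x y, G x -> G y -> G (x *m y)) /\ (forall x, G x -> G (invmx x)).

Definition parabolic (m : nat) (G : 'M[F]_m -> Prop) : Prop :=
  is_subgroup G /\
  exists g : 'M[F]_m, g \in unitmx /\
    forall b, upper_borel b -> G (g *m b *m invmx g).

Definition mxpow (m : nat) (A : 'M[F]_m) (e : nat) : 'M[F]_m := iter e (mulmx A) 1%:M.
Definition unipotent (m : nat) (g : 'M[F]_m) : Prop :=
  exists e : nat, mxpow (g - 1%:M) e = 0.

Definition normal_subgroup (m : nat) (N G : 'M[F]_m -> Prop) : Prop :=
  is_subgroup N /\ (forall x, N x -> G x) /\
  (forall g x, G g -> N x -> N (g *m x *m invmx g)).

(* unipotent radical: the largest normal subgroup consisting of unipotent  *)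
(* elements (in characteristic 0 this is R_u(G) for closed G).  *)
Definition unip_radical (m : nat) (G : 'M[F]_m -> Prop) (x : 'M[F]_m) : Prop :=
  exists N : 'M[F]_m -> Prop,
    normal_subgroup N G /\ (forall y, N y -> unipotent y) /\ N x.

Definition increasing_enum (d p q : nat) (b : 'I_q -> {ffun 'I_d -> 'I_p})
    (I : {set {ffun 'I_d -> 'I_p}}) : Prop :=
  (forall j j' : 'I_q, (j < j')%N -> cle (b j) (b j') /\ b j != b j') /\
  (forall x, x \in I <-> exists j, x = b j).

(* F_beta = { <e_i : beta(i) <= b_j> }_{j=1}^{q-1} (0-based j < q-1) *)
Definition flag_beta (d m p q : nat) (alpha : 'I_(d * m) -> 'I_p)
    (b : 'I_q -> {ffun 'I_d -> 'I_p}) (j : 'I_q) : 'M[F]_m :=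
  coord_span (fun i => cle (beta alpha i) (b j)).

(* d_j = # beta^{-1}({b_1,...,b_j}) (0-based j) *)
Definition dim_j (d m p q : nat) (alpha : 'I_(d * m) -> 'I_p)
    (b : 'I_q -> {ffun 'I_d -> 'I_p}) (j : 'I_q) : nat :=
  #|[set r : 'I_m | [exists j' : 'I_q, (j' <= j)%N && (beta alpha r == b j')]]|.

Definition in_flag_variety (m q : nat) (dims : 'I_q -> nat) (Fl : 'I_q -> 'M[F]_m) : Prop :=
  (forall j : 'I_q, (j < q.-1)%N -> \rank (Fl j) = dims j) /\
  (forall j j' : 'I_q, (j <= j' < q.-1)%N -> (Fl j <= Fl j')%MS).

End Defs.

(* Both P and Q = P ∩ GL(m) are pattern groups {g invertible | g_ij <> 0 -> i ≼ j} of a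
   preorder ≼: for P the pullback of the order of {1..p} along alpha, for Q the pullback of
   the componentwise order along beta.  A pattern group contains a conjugate of the upper
   triangular Borel subgroup iff ≼ is total: conjugate by a permutation sorting the
   indices; conversely, if r and s are incomparable then every conjugate g (1 + E_ij) g^-1,
   i <= j, has vanishing (r, s) and (s, r) entries, which forces
   (g g^-1)_rr (g g^-1)_ss = 0.  For a total ≼ the pattern group is the stabiliser of the
   flag of lower sets of ≼, and GL(m) acts transitively on flags of a given type (match
   adapted bases).  The unipotent radical of a pattern group is the group of g with
   g - 1 supported on the strict part of ≼: on a normal subgroup N of unipotent elements
   tr((a - 1)(b - 1)) = 0, and conjugating by the transvections 1 + E_ji, j ≼ i, kills the
   entries (a - 1)_ij outside the strict part.  So U_Q ⊂ U_P says that beta(r) < beta(s)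
   forces alpha(km + r) < alpha(km + s) in every block k, which is the distinctness
   condition of (b). *)

From Pilot Require Import Defs.
From HB Require Import structures.
From mathcomp Require Import all_boot all_order all_algebra.
From mathcomp Require Import reals complex mxtens.
From mathcomp Require Import fingroup perm.
From Stdlib Require Import FunctionalExtensionality PropExtensionality.
Set Implicit Arguments. Unset Strict Implicit. Unset Printing Implicit Defensive.
Import Order.TTheory GRing.Theory Num.Theory.
Local Open Scope ring_scope.

Section CoordSpan.
Variables (F : fieldType) (n : nat).
Implicit Types (P : pred 'I_n) (g : 'M[F]_n).

Lemma coord_spanE P : Defs.coord_span F P = diag_mx (\row_i (P i)%:R).
Proof.
apply/matrixP=> i j; rewrite !mxE.
by case: eqP => [->|_]; rewrite ?andbT ?andbF ?mulr1n ?mulr0n.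
Qed.

Lemma sub_coord_spanP k (M : 'M[F]_(k, n)) P :
  reflect (forall i j, ~~ P j -> M i j = 0) (M <= Defs.coord_span F P)%MS.
Proof.
rewrite coord_spanE; apply: (iffP idP).
  by case/submxP=> W -> i j nPj; rewrite mul_mx_diag !mxE (negbTE nPj) mulr0.
move=> M0; apply/submxP; exists M; apply/matrixP=> i j.
rewrite mul_mx_diag !mxE; case Pj: (P j); first by rewrite mulr1.
by rewrite mulr0 M0 ?Pj.
Qed.

Lemma stabilizes_coord_spanP g P : g \in unitmx ->
  stabilizes g (Defs.coord_span F P) <-> (forall i j, P i -> ~~ P j -> g j i = 0).
Proof.
move=> ug; have -> : stabilizes g (Defs.coord_span F P) =
    (Defs.coord_span F P *m g^T <= Defs.coord_span F P)%MS.
  apply/idP/idP => [/andP[] //|sub]; rewrite /stabilizes -(mxrank_leqif_eq sub).2.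
  by rewrite mxrankMfree // row_free_unit unitmx_tr.
split=> [/sub_coord_spanP g0 i j Pi nPj | g0].
  by have := g0 i j nPj; rewrite coord_spanE mul_diag_mx !mxE Pi mul1r.
apply/sub_coord_spanP=> i j nPj; rewrite coord_spanE mul_diag_mx !mxE.
by case Pi: (P i); rewrite ?mul0r // g0 ?mulr0.
Qed.

Lemma stabilizes_invmx g S : g \in unitmx -> stabilizes g S -> stabilizes (invmx g) S.
Proof.
move=> ug /eqmxP gS; apply/eqmxP/eqmx_sym.
have := eqmxMr (invmx g)^T gS; rewrite -mulmxA -trmx_mul mulVmx // trmx1 mulmx1.
exact.
Qed.

Lemma mxrank_coord_span P : \rank (Defs.coord_span F P) = #|P|.
Proof.
pose B := \matrix_(a < #|P|, c < n) ((enum_val a == c)%:R : F).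
have BBt : B *m B^T = 1%:M.
  apply/matrixP=> a b; rewrite !mxE (bigD1 (enum_val a)) //= big1 => [|c /negbTE ca].
    by rewrite !mxE eqxx mul1r addr0 (inj_eq enum_val_inj) eq_sym.
  by rewrite !mxE eq_sym ca mul0r.
have sBP : (B <= Defs.coord_span F P)%MS.
  apply/sub_coord_spanP=> a c nPc; rewrite mxE; case: eqP => // ea.
  by have := enum_valP a; rewrite ea -topredE /= (negbTE nPc).
have sPB : (Defs.coord_span F P <= B)%MS.
  apply/row_subP=> i; case Pi: (P i).
    suff -> : row i (Defs.coord_span F P) = row (enum_rank_in Pi i) B by apply: row_sub.
    by apply/rowP=> j; rewrite !mxE enum_rankK_in // Pi.
  suff -> : row i (Defs.coord_span F P) = 0 by apply: sub0mx.
  by apply/rowP=> j; rewrite !mxE Pi.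
rewrite (eqmx_rank (_ : (Defs.coord_span F P == B)%MS)); last exact/andP.
apply/eqP; rewrite eqn_leq rank_leq_row /=.
by have := mxrankM_maxl B B^T; rewrite BBt mxrank1.
Qed.

End CoordSpan.

Definition strict_rel (T : Type) (le : rel T) : rel T := fun i j => le i j && ~~ le j i.

Section StrictRel.
Variables (T : Type) (le : rel T).
Hypotheses (le_refl : reflexive le) (le_trans : transitive le).
Local Notation lt := (strict_rel le).

Lemma strict_rel_irr i : lt i i = false.
Proof. by rewrite /strict_rel le_refl. Qed.

Lemma strict_relW i j : lt i j -> le i j.
Proof. by case/andP. Qed.

Lemma strict_rel_le_trans i j k : lt i j -> le j k -> lt i k.
Proof.
case/andP=> lij nji ljk; rewrite /strict_rel (le_trans lij ljk).
by apply: contra nji; apply: le_trans.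
Qed.

Lemma le_strict_rel_trans i j k : le i j -> lt j k -> lt i k.
Proof.
move=> lij /andP[ljk nkj]; rewrite /strict_rel (le_trans lij ljk).
by apply: contra nkj => lki; apply: le_trans lki lij.
Qed.

Lemma strict_rel_trans i j k : lt i j -> lt j k -> lt i k.
Proof. by move=> lij /strict_relW; apply: strict_rel_le_trans. Qed.

End StrictRel.

Lemma mulmx_entry_neq0 (F : fieldType) m n p (A : 'M[F]_(m, n)) (B : 'M[F]_(n, p)) i j :
  (A *m B) i j != 0 -> exists k, A i k != 0 /\ B k j != 0.
Proof.
rewrite mxE => nz.
suff /existsP[k /andP[Aik Bkj]] : [exists k, (A i k != 0) && (B k j != 0)] by exists k.
apply: contraR nz => /existsPn AB0; apply/eqP/big1 => k _.
by move: (AB0 k); rewrite negb_and !negbK => /orP[] /eqP->; rewrite ?mul0r ?mulr0.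
Qed.

Lemma mulmx1_invmx (F : fieldType) n (A B : 'M[F]_n) : A *m B = 1%:M -> invmx A = B.
Proof.
move=> AB; have [uA _] := mulmx1_unit AB.
by rewrite -[invmx A]mulmx1 -AB mulmxA mulVmx // mul1mx.
Qed.

Lemma mulmx_delta_mxE (R : pzRingType) n (A : 'M[R]_n) (i j p q : 'I_n) :
  (A *m delta_mx i j) p q = A p i * (q == j)%:R.
Proof.
rewrite mxE (bigD1 i) //= big1 => [|k /negbTE ki]; rewrite mxE ?eqxx ?ki ?mulr0 //.
by rewrite addr0.
Qed.

Lemma delta_mx_mulmxE (R : pzRingType) n (A : 'M[R]_n) (i j p q : 'I_n) :
  (delta_mx i j *m A) p q = (p == i)%:R * A j q.
Proof.
rewrite mxE (bigD1 j) //= big1 => [|k /negbTE kj]; rewrite mxE ?eqxx ?kj ?andbF ?mul0r //.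
by rewrite andbT addr0.
Qed.

Section PatternGroups.
Variables (F : fieldType) (n : nat) (le : rel 'I_n).
Hypotheses (le_refl : reflexive le) (le_trans : transitive le).
Local Notation lt := (strict_rel le).
Implicit Types (A B N x y g : 'M[F]_n).

Definition le_supported A := forall i j, A i j != 0 -> le i j.
Definition lt_supported A := forall i j, A i j != 0 -> lt i j.
Definition pattern_group x := x \in unitmx /\ le_supported x.
Definition pattern_uradical x := lt_supported (x - 1%:M).

Lemma le_supported1 : le_supported 1%:M.
Proof. by move=> i j; rewrite mxE; case: (eqVneq i j) => [->|_]; rewrite ?mulr0n ?eqxx. Qed.

Lemma le_supported_mul A B : le_supported A -> le_supported B -> le_supported (A *m B).
Proof. by move=> hA hB i j /mulmx_entry_neq0[k [/hA ? /hB]]; apply: le_trans. Qed.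

Lemma lt_supported_mulr A B : lt_supported A -> le_supported B -> lt_supported (A *m B).
Proof.
by move=> hA hB i j /mulmx_entry_neq0[k [/hA ? /hB]]; apply: strict_rel_le_trans.
Qed.

Lemma lt_supported_mull A B : le_supported A -> lt_supported B -> lt_supported (A *m B).
Proof.
by move=> hA hB i j /mulmx_entry_neq0[k [/hA ? /hB]]; apply: le_strict_rel_trans.
Qed.

Lemma lt_supportedN A : lt_supported A -> lt_supported (- A).
Proof. by move=> hA i j; rewrite mxE oppr_eq0; apply: hA. Qed.

Lemma lt_supportedD A B : lt_supported A -> lt_supported B -> lt_supported (A + B).
Proof.
move=> hA hB i j; rewrite mxE; have [A0|/hA //] := eqVneq (A i j) 0.
by rewrite A0 add0r; apply: hB.
Qed.

Lemma pattern_uradical_le_supported x : pattern_uradical x -> le_supported x.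
Proof.
move=> hx i j; have [-> //|ne] := eqVneq i j.
by move=> nz; apply/strict_relW/hx; rewrite !mxE (negbTE ne) subr0.
Qed.

Lemma lt_supported_nilpotent N : lt_supported N -> mxpow N n = 0.
Proof.
pose height i := #|[pred k | le k i]|.
have height_lt i j : lt i j -> (height i < height j)%N.
  case/andP=> lij nji; apply/proper_card/properP; split.
    by apply/subsetP=> k; rewrite !inE => /le_trans; apply.
  by exists j; rewrite !inE ?le_refl.
move=> hN; suff powN e i j : mxpow N e i j != 0 -> (height i + e <= height j)%N.
  apply/matrixP=> i j; rewrite mxE; apply/eqP/negP => /negP/powN ltij.
  have hi : (0 < height i)%N by apply/card_gt0P; exists i; rewrite inE le_refl.
  have hj : (height j <= n)%N by rewrite -[X in (_ <= X)%N]card_ord max_card.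
  by move: (leq_trans ltij hj); rewrite -[X in (_ <= X)%N]add0n leq_add2r leqNgt hi.
elim: e i j => [|e IH] i j /=.
  by rewrite mxE addn0; case: (eqVneq i j) => [->|_]; rewrite ?mulr0n ?eqxx.
case/mulmx_entry_neq0=> k [/hN/height_lt hik /IH hkj].
by rewrite addnS; apply: leq_trans hkj; rewrite ltn_add2r.
Qed.

Lemma pattern_uradical_unit x : pattern_uradical x -> x \in unitmx.
Proof.
move=> hx; pose N := 1%:M - x.
have N_nil : mxpow N n = 0.
  by apply: lt_supported_nilpotent; rewrite /N -opprB; apply: lt_supportedN.
suff geom e : (1%:M - N) *m (\sum_(k < e) mxpow N k) = 1%:M - mxpow N e.
  by have := geom n; rewrite N_nil subr0 opprB addrC subrK => /mulmx1_unit[].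
elim: e => [|e IH]; first by rewrite big_ord0 mulmx0 subrr.
by rewrite big_ord_recr mulmxDr IH mulmxBl mul1mx addrA subrK.
Qed.

Lemma le_supported_stabilizes x : x \in unitmx ->
  le_supported x <-> forall j, stabilizes x (Defs.coord_span F (le^~ j)).
Proof.
move=> ux; split=> [hx j | stab i j].
  apply/stabilizes_coord_spanP=> // i k lij; apply: contraNeq => /hx lki.
  exact: le_trans lki lij.
apply: contraNT => nle; apply/eqP.
exact: (stabilizes_coord_spanP _ ux).1 (stab j) j i (le_refl j) nle.
Qed.

Lemma pattern_group_invmx x : pattern_group x -> pattern_group (invmx x).
Proof.
case=> ux /(le_supported_stabilizes ux) stab; split; first by rewrite unitmx_inv.
by apply/le_supported_stabilizes=> [|j]; rewrite ?unitmx_inv // stabilizes_invmx.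
Qed.

Lemma pattern_group_subgroup : is_subgroup pattern_group.
Proof.
split; first by move=> x [].
split; first by split; [exact: unitmx1 | exact: le_supported1].
split; last exact: pattern_group_invmx.
by move=> x y [ux hx] [uy hy]; split; [rewrite unitmx_mul ux | exact: le_supported_mul].
Qed.

Lemma pattern_uradical_normal : normal_subgroup pattern_uradical pattern_group.
Proof.
have uradical_pattern x : pattern_uradical x -> pattern_group x.
  by move=> hx; split; [exact: pattern_uradical_unit | exact: pattern_uradical_le_supported].
split; last split=> //.
  split; first by move=> x /pattern_uradical_unit.
  split; first by move=> i j; rewrite subrr mxE eqxx.
  split=> [x y hx hy|x hx].
    rewrite /pattern_uradical (_ : x *m y - 1%:M = (x - 1%:M) *m y + (y - 1%:M)).
      apply: lt_supportedD => //.
      exact: lt_supported_mulr (pattern_uradical_le_supported hy).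
    by rewrite mulmxBl mul1mx addrA subrK.
  have [ux hxi] := pattern_group_invmx (uradical_pattern x hx).
  rewrite /pattern_uradical (_ : invmx x - 1%:M = - (invmx x *m (x - 1%:M))).
    by apply/lt_supportedN/lt_supported_mull.
  by rewrite mulmxBr mulVmx ?mulmx1 ?opprB // -unitmx_inv.
move=> g x pg hx; have [_ hgi] := pattern_group_invmx pg.
rewrite /pattern_uradical (_ : g *m x *m invmx g - 1%:M = g *m (x - 1%:M) *m invmx g).
  by apply: lt_supported_mulr hgi; apply: lt_supported_mull pg.2 hx.
by rewrite mulmxBr mulmxBl mulmx1 mulmxV //; case: pg.
Qed.

Definition diag_lt_supported A := forall i j, A i j != 0 -> (i == j) || lt i j.

Lemma diag_lt_supported_mul A B :
  diag_lt_supported A -> diag_lt_supported B -> diag_lt_supported (A *m B).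
Proof.
move=> hA hB i j /mulmx_entry_neq0[k [/hA/orP[/eqP->|ik] /hB/orP[/eqP<-|kj]]].
- by rewrite eqxx.
- by rewrite kj orbT.
- by rewrite ik orbT.
- by rewrite (strict_rel_trans le_trans ik kj) orbT.
Qed.

Lemma diag_lt_supported_mul_diag A B i :
  diag_lt_supported A -> diag_lt_supported B -> (A *m B) i i = A i i * B i i.
Proof.
move=> hA hB; rewrite mxE (bigD1 i) //= big1 ?addr0 // => k ki.
have [-> |/hA Aik] := eqVneq (A i k) 0; first by rewrite mul0r.
have [-> |/hB Bki] := eqVneq (B k i) 0; first by rewrite mulr0.
move: Aik Bki; rewrite eq_sym (negbTE ki) /= => ik ki'.
by have := strict_rel_trans le_trans ik ki'; rewrite strict_rel_irr.
Qed.

Lemma diag_lt_supported_mxpow_diag A e i :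
  diag_lt_supported A -> mxpow A e i i = A i i ^+ e.
Proof.
move=> hA; suff : diag_lt_supported (mxpow A e) /\ mxpow A e i i = A i i ^+ e by case.
elim: e => [|e [IH1 IH2]] /=.
  split; last by rewrite mxE eqxx expr0.
  by move=> p q; rewrite mxE; case: (eqVneq p q) => // _; rewrite mulr0n eqxx.
split; first exact: diag_lt_supported_mul.
by rewrite diag_lt_supported_mul_diag // IH2 exprS.
Qed.

Lemma pattern_uradical_unipotent x : pattern_uradical x -> unipotent x.
Proof. by exists n; apply: lt_supported_nilpotent. Qed.

End PatternGroups.

Section NilpotentTrace.
Variable C : numClosedFieldType.

Lemma mxpow_eigenvector n (A : 'M[C]_n) (v : 'rV_n) z e :
  v *m A = z *: v -> v *m mxpow A e = z ^+ e *: v.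
Proof.
move=> vA; elim: e => [|e IH] /=; first by rewrite mulmx1 expr0 scale1r.
by rewrite mulmxA vA -scalemxAl IH scalerA exprS.
Qed.

Lemma mxtrace_nilpotent n (A : 'M[C]_n) e : mxpow A e = 0 -> \tr A = 0.
Proof.
case: n A => [|n] A Ae0; first by rewrite /mxtrace big_ord0.
have [r charA] := closed_field_poly_normal (char_poly A).
rewrite (monicP (char_poly_monic A)) scale1r in charA.
have r0 z : z \in r -> z = 0.
  move=> zr; have /eigenvalueP[v vA v0] : eigenvalue A z.
    by rewrite eigenvalue_root_char charA root_prod_XsubC.
  move/eqP: (mxpow_eigenvector e vA); rewrite Ae0 mulmx0 eq_sym scalemx_eq0 (negbTE v0).
  by rewrite orbF expf_eq0 => /andP[_ /eqP].
have prodX : \prod_(z <- r) ('X - z%:P) = 'X^(size r) :> {poly C}.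
  elim: r r0 {charA} => [|z r IH] r0; first by rewrite big_nil.
  rewrite big_cons IH => [|w wr]; last by apply: r0; rewrite inE wr orbT.
  by rewrite (r0 z) ?mem_head // subr0 -exprS.
have size_r : size r = n.+1.
  by have := size_char_poly A; rewrite charA size_prod_XsubC => -[].
have := char_poly_trace A (ltn0Sn n); rewrite charA prodX size_r coefXn ltn_eqF //.
by move/esym/eqP; rewrite oppr_eq0 => /eqP.
Qed.

Lemma mxtrace_unipotent n (x : 'M[C]_n) : unipotent x -> \tr x = n%:R.
Proof.
case=> e /mxtrace_nilpotent; rewrite linearB /= mxtrace1.
by move/eqP; rewrite subr_eq0 => /eqP.
Qed.

End NilpotentTrace.

Section UnipotentRadical.
Variables (C : numClosedFieldType) (n : nat) (le : rel 'I_n).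
Hypotheses (le_refl : reflexive le) (le_trans : transitive le).
Variable N : 'M[C]_n -> Prop.
Hypotheses (N_normal : normal_subgroup N (pattern_group le))
           (N_unipotent : forall y, N y -> unipotent y).

Lemma normal_unipotent_trace_mul a b : N a -> N b -> \tr ((a - 1%:M) *m (b - 1%:M)) = 0.
Proof.
case: N_normal => -[_ [_ [N_mul _]]] _ Na Nb.
have trN c : N c -> \tr c = n%:R by move/N_unipotent/mxtrace_unipotent.
rewrite mulmxBl mulmxBr mul1mx mulmx1 !linearB /= mxtrace1.
by rewrite (trN _ (N_mul _ _ Na Nb)) (trN _ Na) (trN _ Nb) !subrr.
Qed.

(* The transvection X = 1 + E_ji lies in the pattern group as le j i, and the trace of
   (y - 1)(X y X^-1 - 1) collapses to -(y - 1)_ij^2. *)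
Lemma normal_unipotent_entry_ge y i j : N y -> i != j -> le j i -> (y - 1%:M) i j = 0.
Proof.
move=> Ny ij lji; set M := y - 1%:M; set E := delta_mx j i : 'M[C]_n.
have EE : E *m E = 0 by rewrite mul_delta_mx_cond (negbTE ij) mulr0n.
set X := 1%:M + E.
have XV : X *m (1%:M - E) = 1%:M by rewrite mulmxDl mul1mx mulmxBr mulmx1 EE subr0 subrK.
have X_pattern : pattern_group le X.
  split; first by case/mulmx1_unit: XV.
  move=> p q; rewrite !mxE; case: (eqVneq p q) => [->|pq]; rewrite ?le_refl // add0r.
  by case: (eqVneq p j) => [->|]; case: (eqVneq q i) => [->|] //=; rewrite mulr0n eqxx.
have /(normal_unipotent_trace_mul Ny) : N (X *m y *m invmx X) by apply: N_normal.2.2.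
rewrite (mulmx1_invmx XV).
rewrite (_ : X *m y *m (1%:M - E) - 1%:M = X *m M *m (1%:M - E)); last first.
  by rewrite /M [X *m (y - _)]mulmxBr mulmx1 mulmxBl XV.
rewrite -/M (_ : X *m M *m (1%:M - E) = M + E *m M - M *m E - E *m M *m E); last first.
  by rewrite mulmxDl mul1mx mulmxBr mulmx1 mulmxDl opprD addrA.
have EME : E *m M *m E = M i j *: E.
  apply/matrixP=> p q; rewrite mulmx_delta_mxE delta_mx_mulmxE !mxE.
  by case: (p == j); case: (q == i); rewrite ?mulr1 ?mul1r ?mulr0 ?mul0r.
have trME : \tr (M *m E) = M i j.
  rewrite /mxtrace (bigD1 i) //= big1 => [|k /negbTE ki].
    by rewrite mulmx_delta_mxE eqxx mulr1 addr0.
  by rewrite mulmx_delta_mxE ki mulr0.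
have trMM : \tr (M *m M) = 0 by apply: normal_unipotent_trace_mul.
clearbody M; rewrite !mulmxDr !mulmxN !linearD !linearN /= trMM.
have trMEM : \tr (M *m (E *m M)) = \tr (M *m (M *m E)) by rewrite mulmxA mxtrace_mulC.
rewrite EME -scalemxAr linearZ /= trME trMEM.
by rewrite add0r subrr sub0r => /eqP; rewrite oppr_eq0 mulf_eq0 orbb => /eqP.
Qed.

Lemma normal_unipotent_pattern_uradical y : N y -> pattern_uradical le y.
Proof.
move=> Ny; have [_ y_le] := N_normal.2.1 y Ny.
have y_diag_lt : diag_lt_supported le (y - 1%:M).
  move=> p q nz; have [//|pq] := eqVneq p q.
  rewrite /strict_rel y_le /=; last by rewrite !mxE (negbTE pq) subr0 in nz.
  by apply: contra nz => lqp; rewrite normal_unipotent_entry_ge.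
move=> p q nz; case/orP: (y_diag_lt p q nz) => // /eqP pq; move: nz; rewrite pq.
have [e ye] := N_unipotent Ny.
have := diag_lt_supported_mxpow_diag le_refl le_trans e q y_diag_lt.
by rewrite ye mxE => /esym/eqP; rewrite expf_eq0 => /andP[_ ->].
Qed.

End UnipotentRadical.

Lemma unip_radical_pattern_group (C : numClosedFieldType) n (le : rel 'I_n) (x : 'M[C]_n) :
  reflexive le -> transitive le ->
  unip_radical (pattern_group le) x <-> pattern_uradical le x.
Proof.
move=> le_refl le_trans; split=> [[N [N_normal [N_unip Nx]]] | x_urad].
  exact (normal_unipotent_pattern_uradical le_refl le_trans N_normal N_unip Nx).
exists (pattern_uradical le); split; first exact: pattern_uradical_normal.
by split=> //; apply: pattern_uradical_unipotent.
Qed.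

Lemma sorting_perm m (le : rel 'I_m) : transitive le -> total le ->
  exists s : {perm 'I_m}, forall u v, (s u <= s v)%N -> le u v.
Proof.
move=> le_trans le_total; pose L := sort le (enum 'I_m).
have L_sorted : sorted le L := sort_sorted le_total _.
have L_perm : perm_eq L (enum 'I_m) by rewrite perm_sort.
have memL u : u \in L by rewrite (perm_mem L_perm) mem_enum.
have sizeL : size L = m by rewrite (perm_size L_perm) size_enum_ord.
have index_lt u : (index u L < m)%N by rewrite -[X in (_ < X)%N]sizeL index_mem.
have index_inj : injective (fun u => Ordinal (index_lt u)).
  by move=> u v /(congr1 val) /= e; rewrite -(nth_index u (memL u)) e nth_index.
exists (perm index_inj) => u v; rewrite !permE /= => uv.
rewrite -(nth_index u (memL u)) -(nth_index u (memL v)).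
have le_refl : reflexive le by move=> w; have := le_total w w; rewrite orbb.
by apply: (sorted_leq_nth le_trans le_refl) => //; rewrite inE sizeL.
Qed.

Section Transvections.
Variables (F : fieldType) (m : nat).

Lemma conj_transvection_entry (g : 'M[F]_m) (i j u v : 'I_m) : g \in unitmx -> u != v ->
  (g *m (1%:M + delta_mx i j) *m invmx g) u v = g u i * invmx g j v.
Proof.
move=> ug uv; rewrite mulmxDr mulmx1 mulmxDl mulmxV // mxE !mxE (negbTE uv) mulr0n add0r.
rewrite (bigD1 j) //= big1 => [|k /negbTE kj]; rewrite mulmx_delta_mxE ?kj ?mulr0 ?mul0r //.
by rewrite eqxx mulr1 addr0.
Qed.

Lemma upper_borel_transvection (i j : 'I_m) : (2%:R : F) != 0 -> (i <= j)%N ->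
  upper_borel (1%:M + delta_mx i j : 'M[F]_m).
Proof.
move=> two_neq0 ij; have upper (k l : 'I_m) : (l < k)%N -> (1%:M + delta_mx i j : 'M[F]_m) k l = 0.
  move=> lk; have kl : k != l by apply: contraTneq lk => ->; rewrite ltnn.
  rewrite !mxE (negbTE kl) mulr0n add0r.
  case: (eqVneq k i) => [ki|] //=; case: (eqVneq l j) => [lj|] //=.
  by move: ij; rewrite -ki -lj leqNgt lk.
split=> //; rewrite unitmxE -det_tr det_trig; last first.
  by apply/forallP=> k; apply/forallP=> l; apply/implyP=> kl; rewrite mxE upper.
rewrite unitfE; apply/prodf_neq0 => k _; rewrite !mxE eqxx.
by case: (_ && _); rewrite ?mulr0n ?addr0 ?mulr1n ?oner_neq0 //; apply: two_neq0.
Qed.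

End Transvections.

Section ParabolicPatternGroups.
Variables (F : fieldType) (m : nat) (le : rel 'I_m).
Hypotheses (le_refl : reflexive le) (le_trans : transitive le).

Hypothesis two_neq0 : (2%:R : F) != 0.

Lemma conj_borel_pattern_group : total le ->
  exists2 g : 'M[F]_m, g \in unitmx &
    forall b, upper_borel b -> pattern_group le (g *m b *m invmx g).
Proof.
case/(sorting_perm le_trans)=> s s_le.
have sV : perm_mx s *m perm_mx s^-1 = 1%:M :> 'M[F]_m by rewrite -perm_mxM mulgV perm_mx1.
have [us _] := mulmx1_unit sV.
exists (perm_mx s) => // b [ub b_upper].
rewrite (mulmx1_invmx sV) -row_permE -col_permE.
split; first by rewrite col_permE row_permE !unitmx_mul ub us unitmx_perm.
move=> u v; rewrite !mxE => nz; apply: s_le; rewrite leqNgt.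
by apply: contra nz => lt; rewrite b_upper.
Qed.

Lemma parabolic_pattern_group_total : parabolic (@pattern_group F m le) -> total le.
Proof.
case=> _ [g [ug g_conj]] r s; apply/negPn/negP => /norP[nrs nsr].
have conj0 u v (i j : 'I_m) : ~~ le u v -> (i <= j)%N -> g u i * invmx g j v = 0.
  move=> nuv ij; have uv : u != v by apply: contraNneq nuv => ->.
  rewrite -conj_transvection_entry //; apply/eqP; apply: contraNT nuv.
  by have [_] := g_conj _ (upper_borel_transvection two_neq0 ij); apply.
have gV u : \sum_a g u a * invmx g a u = 1.
  by have /matrixP/(_ u u) := mulmxV ug; rewrite !mxE eqxx.
have /eqP := oner_neq0 F; apply.
rewrite -(mulr1 1) -{1}(gV r) -(gV s) big_distrlr /= big1 // => a _; rewrite big1 // => b _.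
rewrite [g s b * _]mulrC mulrACA; case: (leqP a b) => ab; first by rewrite conj0 ?mul0r.
by rewrite [invmx g a r * _]mulrC (conj0 s r b a) ?mulr0 ?(ltnW ab).
Qed.

Lemma parabolic_pattern_group : parabolic (@pattern_group F m le) <-> total le.
Proof.
split=> [|le_total]; first exact: parabolic_pattern_group_total.
split; first exact: pattern_group_subgroup.
by have [g ug g_conj] := conj_borel_pattern_group le_total; exists g.
Qed.

End ParabolicPatternGroups.

Section AdaptedBasis.
Variables (F : fieldType) (m K : nat) (C : nat -> 'M[F]_m).
Hypothesis C_mono : forall j j', (j <= j')%N -> (j' < K)%N -> (C j <= C j')%MS.

(* The i-th basis vector is picked in target i, the first space of the chain of rank > i,
   outside the span of the previous ones. *)
Let first_above i := find (fun j => i < \rank (C j))%N (iota 0 K).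
Let target i := if (first_above i < K)%N then C (first_above i) else 1%:M.

Let first_above_rank i : (first_above i < K)%N -> (i < \rank (C (first_above i)))%N.
Proof.
rewrite /first_above => lt_K.
have has_i : has (fun j => i < \rank (C j))%N (iota 0 K) by rewrite has_find size_iota.
by have := nth_find 0 has_i; rewrite nth_iota.
Qed.

Let first_above_min i j : (j < K)%N -> (i < \rank (C j))%N -> (first_above i <= j)%N.
Proof.
move=> jK ij; rewrite leqNgt; apply/negP => /(before_find 0).
by rewrite nth_iota ?add0n // ij.
Qed.

Let first_above_mono i i' : (i <= i')%N -> (first_above i <= first_above i')%N.
Proof.
move=> ii'; case: (ltnP (first_above i') K) => [i'K|].
  exact/first_above_min/(leq_ltn_trans ii' (first_above_rank i'K)).
by apply: leq_trans; rewrite -(size_iota 0 K) find_size.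
Qed.

Let target_mono i i' : (i <= i')%N -> (target i <= target i')%MS.
Proof.
move=> ii'; have mono := first_above_mono ii'; rewrite /target.
case: (ltnP (first_above i') K) => [i'K|_]; last by case: ifP => _; apply: submx1.
by rewrite (leq_ltn_trans mono i'K); apply: C_mono.
Qed.

Let target_rank i : (i < m)%N -> (i < \rank (target i))%N.
Proof. by rewrite /target; case: ifP => [/first_above_rank|_]; rewrite ?mxrank1. Qed.

Let target_sub i j : (j < K)%N -> (i < \rank (C j))%N -> (target i <= C j)%MS.
Proof.
move=> jK ij; have fj := first_above_min jK ij.
by rewrite /target (leq_ltn_trans fj jK); apply: C_mono.
Qed.

Let rows_mx (s : seq 'rV[F]_m) t : 'M[F]_(t, m) := \matrix_(i < t) nth 0 s i.

Let rows_mx_rcons s v : (rows_mx (rcons s v) (size s).+1 :=: rows_mx s (size s) + v)%MS.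
Proof.
apply/eqmxP/andP; split.
  apply/row_subP=> i; rewrite rowK nth_rcons; case: ifP => [lt_i_s|].
    apply: submx_trans (addsmxSl _ _).
    by have := row_sub (Ordinal lt_i_s) (rows_mx s _); rewrite rowK.
  move/negbT; rewrite -leqNgt => s_le_i.
  have -> : (i : nat) = size s by apply/eqP; rewrite eqn_leq s_le_i -ltnS ltn_ord.
  by rewrite eqxx addsmxSr.
rewrite addsmx_sub; apply/andP; split.
  apply/row_subP=> i; have := row_sub (widen_ord (leqnSn _) i) (rows_mx (rcons s v) _).
  by rewrite !rowK /= nth_rcons ltn_ord.
have := row_sub ord_max (rows_mx (rcons s v) (size s).+1).
by rewrite rowK nth_rcons ltnn eqxx.
Qed.

Let adapted_rows t : (t <= m)%N -> exists s : seq 'rV[F]_m,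
  [/\ size s = t, \rank (rows_mx s t) = t & forall i, (i < t)%N -> (nth 0 s i <= target i)%MS].
Proof.
elim: t => [|t IH] tm.
  by exists [::]; split=> //; apply/eqP; rewrite -leqn0 rank_leq_row.
have [s [size_s rank_s s_target]] := IH (ltnW tm); subst t.
have [k k_new] : exists k, ~~ (row k (target (size s)) <= rows_mx s (size s))%MS.
  apply/existsP; apply: contraTT (target_rank tm) => /existsPn all_old.
  have : (target (size s) <= rows_mx s (size s))%MS.
    by apply/row_subP=> k; have := all_old k; rewrite negbK.
  by move/mxrankS; rewrite rank_s leqNgt.
set v := row k (target (size s)) in k_new *.
exists (rcons s v); split; first by rewrite size_rcons.
  rewrite rows_mx_rcons; apply/eqP; rewrite eqn_leq.
  rewrite (leq_trans (mxrank_adds_leqif _ _).1) /=; last first.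
    by rewrite rank_s rank_rV -[X in (_ <= X)%N]addn1 leq_add2l leq_b1.
  have [le_rank eq_rank] := mxrank_leqif_sup (addsmxSl (rows_mx s (size s)) v).
  by rewrite -[X in (X < _)%N]rank_s ltn_neqAle le_rank eq_rank andbT addsmx_sub submx_refl.
move=> i; rewrite ltnS nth_rcons leq_eqVlt => /orP[/eqP->|lt_i_s].
  by rewrite ltnn eqxx row_sub.
by rewrite lt_i_s s_target.
Qed.

Lemma adapted_basis : exists2 E : 'M[F]_m, E \in unitmx &
  forall j, (j < K)%N -> ((pid_mx (\rank (C j)) : 'M[F]_m) *m E :=: C j)%MS.
Proof.
have [s [_ rank_s s_target]] := adapted_rows (leqnn m).
have uE : rows_mx s m \in unitmx by rewrite -row_free_unit /row_free rank_s.
exists (rows_mx s m) => // j jK; apply/eqmxP.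
have sub : ((pid_mx (\rank (C j)) : 'M[F]_m) *m rows_mx s m <= C j)%MS.
  apply/row_subP=> i; rewrite row_mul; case: (ltnP i (\rank (C j))) => [ij|ji].
    have -> : row i (pid_mx (\rank (C j))) = row i (1%:M : 'M[F]_m).
      by apply/rowP=> k; rewrite !mxE ij andbT.
    by rewrite row1 -rowE rowK (submx_trans (s_target i _)) ?target_sub.
  have -> : row i (pid_mx (\rank (C j))) = 0 :> 'rV[F]_m.
    by apply/rowP=> k; rewrite !mxE ltnNge ji andbF.
  by rewrite mul0mx sub0mx.
rewrite -(mxrank_leqif_eq sub).2 mxrankMfree ?row_free_unit //.
by rewrite rank_pid_mx ?rank_leq_row ?rank_leq_col.
Qed.

End AdaptedBasis.

Lemma flag_variety_transitive (F : fieldType) m q (dims : 'I_q -> nat)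
    (Fl1 Fl2 : 'I_q -> 'M[F]_m) :
  in_flag_variety dims Fl1 -> in_flag_variety dims Fl2 ->
  exists2 g : 'M[F]_m, g \in unitmx &
    forall j : 'I_q, (j < q.-1)%N -> (Fl1 j *m g :=: Fl2 j)%MS.
Proof.
pose chain (Fl : 'I_q -> 'M[F]_m) n := oapp Fl 0 (insub n).
have chainE Fl (j : 'I_q) : chain Fl j = Fl j by rewrite /chain valK.
have chain_mono Fl : in_flag_variety dims Fl ->
    forall j j', (j <= j')%N -> (j' < q.-1)%N -> (chain Fl j <= chain Fl j')%MS.
  case=> _ Fl_mono j j' jj' j'q; have j'_q : (j' < q)%N := leq_trans j'q (leq_pred q).
  have j_q : (j < q)%N := leq_ltn_trans jj' j'_q.
  rewrite -[j]/(val (Ordinal j_q)) -[j']/(val (Ordinal j'_q)) !chainE.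
  by apply: Fl_mono; rewrite /= jj'.
move=> Fl1_flag Fl2_flag.
have [E1 uE1 E1_adapted] := adapted_basis (chain_mono _ Fl1_flag).
have [E2 uE2 E2_adapted] := adapted_basis (chain_mono _ Fl2_flag).
exists (invmx E1 *m E2) => [|j jq]; first by rewrite unitmx_mul unitmx_inv uE1 uE2.
have := E1_adapted j jq; have := E2_adapted j jq.
rewrite !chainE Fl1_flag.1 // Fl2_flag.1 // => E2j E1j.
apply: eqmx_trans (eqmxMr _ (eqmx_sym E1j)) (eqmx_trans _ E2j).
by rewrite mulmxA mulmxK.
Qed.

Section ComponentwiseOrder.
Variables d p : nat.
Implicit Types x y z : {ffun 'I_d -> 'I_p}.

Lemma cle_refl x : cle x x.
Proof. by apply/forallP=> k. Qed.

Lemma cle_trans x y z : cle x y -> cle y z -> cle x z.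
Proof. by move=> /forallP xy /forallP yz; apply/forallP=> k; apply: leq_trans (xy k) _. Qed.

Lemma cle_anti x y : cle x y -> cle y x -> x = y.
Proof.
by move=> /forallP xy /forallP yx; apply/ffunP=> k; apply/val_inj/eqP; rewrite eqn_leq xy yx.
Qed.

End ComponentwiseOrder.

Section BlockDiagonal.
Variables (F : fieldType) (d m p : nat) (alpha : 'I_(d * m) -> 'I_p).
Implicit Types x y : 'M[F]_m.

Definition alpha_le : rel 'I_(d * m) := fun a b => (alpha a <= alpha b)%N.
Definition beta_le : rel 'I_m := fun r s => cle (beta alpha r) (beta alpha s).

Lemma alpha_le_refl : reflexive alpha_le. Proof. by move=> a; apply: leqnn. Qed.
Lemma alpha_le_trans : transitive alpha_le. Proof. by move=> b a c; apply: leq_trans. Qed.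
Lemma beta_le_refl : reflexive beta_le. Proof. by move=> r; apply: cle_refl. Qed.
Lemma beta_le_trans : transitive beta_le. Proof. by move=> s r t; apply: cle_trans. Qed.

Lemma strict_alpha_le a b : strict_rel alpha_le a b = (alpha a < alpha b)%N.
Proof. by rewrite /strict_rel /alpha_le -ltnNge andb_idl // => /ltnW. Qed.

Lemma blockdiagE x k1 r k2 s :
  blockdiag d x (mxtens_index (k1, r)) (mxtens_index (k2, s)) = (k1 == k2)%:R * x r s.
Proof. by rewrite /blockdiag tensmxE mxE. Qed.

Lemma blockdiag1 : blockdiag d (1%:M : 'M[F]_m) = 1%:M.
Proof.
apply/matrixP=> a b; case: (mxtens_indexP a) => k1 r; case: (mxtens_indexP b) => k2 s.
rewrite blockdiagE !mxE (can_eq (@mxtens_indexK d m)) xpair_eqE.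
by case: (k1 == k2); case: (r == s); rewrite ?mul1r ?mul0r.
Qed.

Lemma blockdiagB x y : blockdiag d (x - y) = blockdiag d x - blockdiag d y.
Proof. by apply/matrixP=> a b; rewrite !mxE mulrBr. Qed.

Lemma blockdiag_unit x : x \in unitmx -> blockdiag d x \in unitmx.
Proof.
move=> ux; suff : blockdiag d x *m blockdiag d (invmx x) = 1%:M by case/mulmx1_unit.
by rewrite /blockdiag tensmx_mul mulmx1 mulmxV // -/(blockdiag d 1%:M) blockdiag1.
Qed.

Lemma stab_alphaE (g : 'M[F]_(d * m)) : stab_alpha alpha g <-> pattern_group alpha_le g.
Proof.
split=> -[ug g_stab]; split=> //; last first.
  move=> j _; apply/stabilizes_coord_spanP=> // i k ij nkj; apply/eqP; apply: contraNT nkj.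
  by move/g_stab/leq_trans; apply.
move=> b a nz; case: (ltnP (alpha a) p.-1) => [a_lt|]; last first.
  by apply: leq_trans; rewrite -ltnS (leq_trans (ltn_ord _)) // leqSpred.
apply: contraTT nz => nba; rewrite negbK; apply/eqP.
exact: (stabilizes_coord_spanP _ ug).1 (g_stab _ a_lt) a b (leqnn _) nba.
Qed.

Lemma Q_ofE x : Q_of alpha x <-> pattern_group beta_le x.
Proof.
split=> [[ux /stab_alphaE[_ bx_le]] | [ux x_le]]; split=> //.
  move=> r s nz; apply/forallP=> k; rewrite !ffunE; apply: bx_le.
  by rewrite blockdiagE eqxx mul1r.
apply/stab_alphaE; split; first exact: blockdiag_unit.
move=> a b; case: (mxtens_indexP a) => k1 r; case: (mxtens_indexP b) => k2 s.
rewrite blockdiagE; case: (eqVneq k1 k2) => [<-|]; last by rewrite mul0r eqxx.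
by rewrite mul1r => /x_le/forallP/(_ k1); rewrite !ffunE.
Qed.

Lemma pattern_uradical_blockdiag x : pattern_uradical alpha_le (blockdiag d x) <->
  forall r s, (x - 1%:M) r s != 0 -> forall k, (beta alpha r k < beta alpha s k)%N.
Proof.
rewrite /pattern_uradical -blockdiag1 -blockdiagB; split=> [x_urad r s nz k | x_lt a b].
  have := x_urad (mxtens_index (k, r)) (mxtens_index (k, s)).
  by rewrite blockdiagE eqxx mul1r strict_alpha_le !ffunE; apply.
case: (mxtens_indexP a) => k1 r; case: (mxtens_indexP b) => k2 s.
rewrite blockdiagE strict_alpha_le; case: (eqVneq k1 k2) => [<-|]; last by rewrite mul0r eqxx.
by rewrite mul1r => /x_lt/(_ k1); rewrite !ffunE.
Qed.

Lemma beta_in_Iset r : beta alpha r \in Iset alpha.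
Proof. exact: imset_f. Qed.

Lemma total_beta_le :
  total beta_le <->
  forall x y : {ffun 'I_d -> 'I_p}, x \in Iset alpha -> y \in Iset alpha -> cle x y || cle y x.
Proof.
split=> [beta_total _ _ /imsetP[r _ ->] /imsetP[s _ ->] | I_total r s]; first exact: beta_total.
exact: I_total (beta_in_Iset r) (beta_in_Iset s).
Qed.

Lemma blockdiag_pattern_uradical_iff : total beta_le ->
  (forall x, pattern_uradical beta_le x -> pattern_uradical alpha_le (blockdiag d x)) <->
  (forall x y : {ffun 'I_d -> 'I_p},
     x \in Iset alpha -> y \in Iset alpha -> x != y -> forall k, x k != y k).
Proof.
move=> beta_total.
have strict_beta r s : strict_rel beta_le r s -> beta alpha r != beta alpha s.
  by case/andP=> _; apply: contraNneq => e; rewrite /beta_le e cle_refl.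
split=> [incl _ _ /imsetP[r _ ->] /imsetP[s _ ->] rs k | distinct x x_urad].
  wlog lt_rs : r s rs / strict_rel beta_le r s => [wlog_rs|].
    have lt_of_le u v :
        beta alpha u != beta alpha v -> beta_le u v -> strict_rel beta_le u v.
      by move=> uv le_uv; rewrite /strict_rel le_uv; apply: contra uv => /(cle_anti le_uv)->.
    case/orP: (beta_total r s) => [/(lt_of_le _ _ rs)|]; first exact: (wlog_rs r s).
    by rewrite eq_sym in rs; rewrite eq_sym => /(lt_of_le _ _ rs); apply: (wlog_rs s r).
  pose X := 1%:M + delta_mx r s : 'M[F]_m.
  have X_rs : (X - 1%:M) r s = 1 by rewrite addrC addKr mxE !eqxx.
  have X_urad : pattern_uradical beta_le X.
    move=> u v; rewrite addrC addKr mxE.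
    by case: (eqVneq u r) => [->|]; case: (eqVneq v s) => [->|] //=; rewrite eqxx.
  have := (pattern_uradical_blockdiag X).1 (incl X X_urad) r s _ k; rewrite X_rs oner_neq0.
  by move/(_ isT); apply: contraTneq => ->; rewrite ltnn.
apply/pattern_uradical_blockdiag=> r s nz k; have lt_rs := x_urad r s nz.
have := distinct _ _ (beta_in_Iset r) (beta_in_Iset s) (strict_beta _ _ lt_rs) k.
by case/andP: lt_rs => /forallP le_rs _; rewrite ltn_neqAle le_rs andbT.
Qed.

End BlockDiagonal.

Section BetaFlag.
Variables (F : fieldType) (d m p q : nat) (alpha : 'I_(d * m) -> 'I_p).
Variable b : 'I_q -> {ffun 'I_d -> 'I_p}.
Hypothesis b_enum : increasing_enum b (Iset alpha).

Lemma increasing_enum_cle (j j' : 'I_q) : (j <= j')%N -> cle (b j) (b j').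
Proof.
rewrite leq_eqVlt => /orP[/eqP/val_inj->|/b_enum.1[] //]; exact: cle_refl.
Qed.

Lemma beta_enum r : exists j, beta alpha r = b j.
Proof. exact/b_enum.2/beta_in_Iset. Qed.

Lemma cle_beta_enum r (j : 'I_q) :
  cle (beta alpha r) (b j) = [exists j' : 'I_q, (j' <= j)%N && (beta alpha r == b j')].
Proof.
have [j' ->] := beta_enum r; apply/idP/existsP => [b_j'_j|[j'' /andP[j''_j /eqP->]]].
  exists j'; rewrite eqxx andbT leqNgt; apply/negP => /b_enum.1[b_j_j'].
  by rewrite (cle_anti b_j_j' b_j'_j) eqxx.
exact: increasing_enum_cle.
Qed.

Lemma flag_beta_in_flag_variety : in_flag_variety (dim_j alpha b) (flag_beta F alpha b).
Proof.
split=> [j _ | j j' /andP[jj' _]].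
  by rewrite mxrank_coord_span /dim_j; apply: eq_card => r; rewrite !inE -cle_beta_enum.
apply/sub_coord_spanP=> u v /negbTE le_v_j'; rewrite mxE.
case le_u_j : (cle _ _) => //=; case: eqP => // uv.
by rewrite -uv (cle_trans le_u_j (increasing_enum_cle jj')) in le_v_j'.
Qed.

Lemma beta_le_stabilizes (x : 'M[F]_m) : x \in unitmx ->
  le_supported (beta_le alpha) x <->
  forall j : 'I_q, (j < q.-1)%N -> stabilizes x (flag_beta F alpha b j).
Proof.
move=> ux; split=> [x_le j _ | x_stab k i nz].
  apply/stabilizes_coord_spanP=> // i k le_i_j; apply: contraNeq => /x_le le_k_i.
  exact: cle_trans le_k_i le_i_j.
have [j0 beta_i] := beta_enum i; rewrite /beta_le beta_i.
case: (ltnP j0 q.-1) => [j0_lt|j0_ge].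
  have le_i_j0 : cle (beta alpha i) (b j0) by rewrite beta_i cle_refl.
  apply: contraTT nz => nle; rewrite negbK; apply/eqP.
  exact: (stabilizes_coord_spanP _ ux).1 (x_stab _ j0_lt) i k le_i_j0 nle.
have [j1 ->] := beta_enum k; apply: increasing_enum_cle.
by apply: leq_trans j0_ge; rewrite -ltnS (leq_trans (ltn_ord j1)) ?leqSpred.
Qed.

End BetaFlag.

Theorem lemma5p1 (R : realType) (m d p : nat) (hm : (0 < m)%N) (hd : (1 < d)%N)
    (alpha : 'I_(d * m) -> 'I_p) (halpha : forall j : 'I_p, exists i, alpha i = j) :
  let Q := @Q_of R[i] d m p alpha in
  let I := Iset alpha in
  let total := forall x y, x \in I -> y \in I -> cle x y || cle y x in
  (* (a) *)
  (parabolic Q <-> total) /\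
  (total ->
   forall (q : nat) (b : 'I_q -> {ffun 'I_d -> 'I_p}), increasing_enum b I ->
     (forall x : 'M[R[i]]_m, Q x <->
        (x \in unitmx /\
         forall j : 'I_q, (j < q.-1)%N -> stabilizes x (flag_beta R[i] alpha b j))) /\
     in_flag_variety (dim_j alpha b) (flag_beta R[i] alpha b) /\
     (forall Fl : 'I_q -> 'M[R[i]]_m, in_flag_variety (dim_j alpha b) Fl ->
        exists g : 'M[R[i]]_m, g \in unitmx /\
          forall j : 'I_q, (j < q.-1)%N -> ((flag_beta R[i] alpha b j *m g^T) == Fl j)%MS)) /\
  (* (b) *)
  (parabolic Q ->
   ((forall x : 'M[R[i]]_m, unip_radical Q x ->
       unip_radical (@stab_alpha R[i] (d * m) p alpha) (blockdiag d x)) <->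
    (forall x y, x \in I -> y \in I -> x != y -> forall k : 'I_d, x k != y k))).
Proof.
move=> Q I total_I.
have eQ : Q = @pattern_group R[i] m (beta_le alpha).
  by apply: functional_extensionality => x; apply: propositional_extensionality; apply: Q_ofE.
have eP : @stab_alpha R[i] _ _ alpha = pattern_group (alpha_le alpha).
  by apply: functional_extensionality => x; apply: propositional_extensionality; apply: stab_alphaE.
have parabolic_total : parabolic Q <-> total_I.
  have two_neq0 : (2%:R : R[i]) != 0 by rewrite pnatr_eq0.
  rewrite eQ; apply: iff_trans (total_beta_le alpha).
  exact (parabolic_pattern_group (beta_le_refl alpha) (@beta_le_trans _ _ _ alpha) two_neq0).
split; first exact: parabolic_total.
split=> [_ q b b_enum | /parabolic_total/total_beta_le beta_total].
  split=> [x|].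
    by rewrite eQ; split=> -[ux x_le]; split=> //; apply/(beta_le_stabilizes b_enum ux).
  split=> [|Fl Fl_flag]; first exact: flag_beta_in_flag_variety.
  have [g ug g_conj] := flag_variety_transitive (flag_beta_in_flag_variety _ b_enum) Fl_flag.
  exists g^T; rewrite unitmx_tr trmxK; split=> // j jq; exact/eqmxP/g_conj.
have urad_Q x : unip_radical Q x <-> pattern_uradical (beta_le alpha) x.
  rewrite eQ.
  exact (unip_radical_pattern_group x (beta_le_refl alpha) (@beta_le_trans _ _ _ alpha)).
have urad_P (y : 'M[R[i]]_(d * m)) :
    unip_radical (stab_alpha alpha) y <-> pattern_uradical (alpha_le alpha) y.
  rewrite eP.
  exact (unip_radical_pattern_group y (alpha_le_refl alpha) (@alpha_le_trans _ _ _ alpha)).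
apply: iff_trans (@blockdiag_pattern_uradical_iff R[i] _ _ _ alpha beta_total).
by split=> incl x /urad_Q/incl/urad_P.
Qed.
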